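(* For pairs of reals write $(a,b) \succeq (a',b')$ if $a \ge a'$ and $a+b \ge a'+b'$. Let $a,b,c,d,a',b',c',d'$ be nonnegative reals with $a' \ge b'$ and $c' \ge d'$. If $(a,b) \succeq (a',b')$ and $(c,d) \succeq (c',d')$, then $(ac,bd) \succeq (a'c',b'd')$. *)

From Stdlib Require Import Reals.
Open Scope R_scope.

Definition succeq (p q : R * R) : Prop :=
  fst p >= fst q /\ fst p + snd p >= fst q + snd q.

From Stdlib Require Import Reals Lra.
Open Scope R_scope.

(* If c >= d, then
     ac + bd = a(c-d) + (a+b)d >= a'(c-d) + (a'+b')d
             = (a'-b')c + b'(c+d) >= (a'-b')c' + b'(c'+d') = a'c' + b'd',
   and the case a >= b is symmetric. Otherwise b > a >= a' >= b' and
   d > c >= c' >= d', so ac >= a'c' and bd >= b'd' termwise. *)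

Lemma succeq_mul_sum_le (a b c d a' b' c' d' : R) :
  0 <= d -> d <= c -> 0 <= b' -> b' <= a' ->
  succeq (a, b) (a', b') -> succeq (c, d) (c', d') ->
  a' * c' + b' * d' <= a * c + b * d.
Proof.
intros hd hdc hb' hba' [ha' hab'] [hc' hcd'].
simpl in ha', hab', hc', hcd'.
assert (dominance_ab : a' * (c - d) + (a' + b') * d <= a * (c - d) + (a + b) * d).
{ apply Rplus_le_compat; apply Rmult_le_compat_r; lra. }
assert (dominance_cd : (a' - b') * c' + b' * (c' + d') <= (a' - b') * c + b' * (c + d)).
{ apply Rplus_le_compat; apply Rmult_le_compat_l; lra. }
lra.
Qed.

Theorem lemma4p5 (a b c d a' b' c' d' : R)
  (ha : 0 <= a) (hb : 0 <= b) (hc : 0 <= c) (hd : 0 <= d)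
  (ha' : 0 <= a') (hb' : 0 <= b') (hc' : 0 <= c') (hd' : 0 <= d')
  (hab' : a' >= b') (hcd' : c' >= d')
  (h1 : succeq (a, b) (a', b')) (h2 : succeq (c, d) (c', d')) :
  succeq (a * c, b * d) (a' * c', b' * d').
Proof.
pose proof (proj1 h1) as haa'; pose proof (proj1 h2) as hcc'; simpl in haa', hcc'.
split; simpl; apply Rle_ge.
- apply Rmult_le_compat; lra.
- destruct (Rle_dec d c) as [hdc | hcd].
  { apply succeq_mul_sum_le; assumption || lra. }
  destruct (Rle_dec b a) as [hba | hab].
  { rewrite (Rmult_comm a), (Rmult_comm b), (Rmult_comm a'), (Rmult_comm b').
    apply succeq_mul_sum_le; assumption || lra. }
  apply Rplus_le_compat; apply Rmult_le_compat; lra.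
Qed.
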